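(* Let $N_1,N_2,N_3\in\mathbb{N}$ with $(N_1,N_2)\neq(0,0)$, and let $\mathcal{G}=\mathcal{G}_{\mathrm{KMA}}(N_1,N_2,N_3)$. Then $\mathcal{G}-\mathcal{G}=\{-\max\mathcal{G},\ldots,\max\mathcal{G}\}$.
   Context: For $a\in\mathbb{Z}$, $b\in\mathbb{N}_+$, $c\in\mathbb{Z}$, $\{a:b:c\}=\{a,a+b,\ldots\}\cap(-\infty,c]$ (empty if $c<a$), $\{a:c\}=\{a:1:c\}$; set sums/differences are elementwise, $\mathcal{A}+c=\{a+c\}$. For $N_1,N_2\in\mathbb{N}$: $\mathcal{D}_1=\{0:N_1-1\}$, $\mathcal{D}_2=\{0:N_1+1:(N_2-1)(N_1+1)\}$, $\mathcal{D}_{\mathrm{CNA}}=\mathcal{D}_1\cup(\mathcal{D}_2+N_1)\cup(\mathcal{D}_1+N_2(N_1+1))$, $M=\max\mathcal{D}_{\mathrm{CNA}}$. For $N_3\in\mathbb{N}$: $\mathcal{D}_3=\{jN_1: j=0,\ldots,N_1\}+\{(i-1)(N_1^2+M+1): i=1,\ldots,N_3\}$ (empty if $N_3=0$). The Kl{\o}ve--Mossige array is $\mathcal{G}_{\mathrm{KMA}}(N_1,N_2,N_3)=\mathcal{D}_{\mathrm{CNA}}\cup(\mathcal{D}_3+2M+1)$. *)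

(* Finite integer sets are represented as sequences of int. *)
From mathcomp Require Import all_boot all_order all_algebra.
Set Implicit Arguments. Unset Strict Implicit. Unset Printing Implicit Defensive.
Import Order.TTheory GRing.Theory Num.Theory.
Local Open Scope ring_scope.

(* {a:b:c} = {a, a+b, ...} ∩ (-oo, c]  (empty if c < a), for b >= 1.
   Indices k range over 0..|c-a|, which suffices since b >= 1. *)
Definition aprog (a : int) (b : nat) (c : int) : seq int :=
  [seq x <- [seq a + (k%:Z * b%:Z) | k <- iota 0 `|c - a|.+1] | x <= c].

Definition irange (a c : int) : seq int := aprog a 1 c.

Definition sumset (s t : seq int) : seq int := [seq x + y | x <- s, y <- t].
Definition diffset (s t : seq int) : seq int := [seq x - y | x <- s, y <- t].
Definition shift (s : seq int) (c : int) : seq int := [seq x + c | x <- s].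

(* maximum of a finite set of integers; all sets below are nonempty and
   consist of nonnegative integers, so the default 0 is never the answer
   for a non-trivial reason *)
Definition smax (s : seq int) : int := \big[Num.max/0]_(x <- s) x.

Section KMA.
Variables N1 N2 N3 : nat.

Definition D1 : seq int := irange 0 (N1%:Z - 1).
Definition D2 : seq int := aprog 0 N1.+1 ((N2%:Z - 1) * (N1%:Z + 1)).
Definition DCNA : seq int :=
  D1 ++ shift D2 N1%:Z ++ shift D1 (N2%:Z * (N1%:Z + 1)).
Definition MCNA : int := smax DCNA.
Definition D3 : seq int :=
  sumset [seq (j%:Z * N1%:Z) | j <- iota 0 N1.+1]
         [seq ((i%:Z - 1) * (N1%:Z ^+ 2 + MCNA + 1)) | i <- iota 1 N3].
Definition GKMA : seq int := DCNA ++ shift D3 (2 * MCNA + 1).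
End KMA.

From Pilot Require Import Defs.
From mathcomp Require Import all_boot all_order all_algebra zify ring.
Set Implicit Arguments. Unset Strict Implicit. Unset Printing Implicit Defensive.
Import Order.TTheory GRing.Theory Num.Theory.
Local Open Scope ring_scope.

(* Write n = N1, m = N2, c = N3.  The array D_CNA is described by the
   predicate [inCNA n m]: the run {0..n-1}, the progression n + k(n+1)
   (0 <= k < m) and the run m(n+1) + {0..n-1}.  Its maximum is
   M = m(n+1) + n - 1, and it is symmetric under x |-> M - x.  Two covering
   facts drive the proof: D_CNA - D_CNA contains [0, M], and
   {0, n, ..., n^2} + D_CNA contains [0, n^2 + M].  The array G adds the
   translates jn + (i-1)L + 2M + 1 (0 <= j <= n, 1 <= i <= c) of period
   L = n^2 + M + 1, described by [inKMA n m c]; its maximum is M + cL.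
   A difference d in (M, M + cL] is obtained by writing d - M - 1 = qL + r,
   r = jn + z with z in D_CNA, and d = (jn + qL + 2M + 1) - (M - z).
   The file first proves these facts for integer parameters, then links the
   list-based definitions of Defs to the predicates, and concludes with the
   general observation that a set of nonnegative integers bounded by U
   whose positive differences cover [0, U] has difference set [-U, U]. *)

Lemma mem_aprog (a c : int) (b : nat) (x : int) : (0 < b)%N ->
  x \in aprog a b c <-> exists k : int, [/\ 0 <= k, x = a + k * b%:Z & x <= c].
Proof.
move=> b_gt0; rewrite /aprog mem_filter; split.
  by case/andP=> xc /mapP[k _ xE]; exists k%:Z; rewrite -xE.
case=> k [k_ge0 -> le_c]; rewrite le_c; apply/mapP; exists `|k|%N.
  rewrite mem_iota add0n ltnS; nia.
by rewrite gez0_abs.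
Qed.

Lemma mem_shift (s : seq int) (c x : int) :
  x \in shift s c <-> exists2 y, y \in s & x = y + c.
Proof. by split; [case/mapP=> y ? ->; exists y | case=> y ? ->; apply: map_f]. Qed.

Lemma mem_diffset (s t : seq int) (d : int) :
  d \in diffset s t <-> exists x y, [/\ x \in s, y \in t & d = x - y].
Proof.
split; first by case/allpairsP=> [[x y] /= [? ? ->]]; exists x, y.
by case=> x [y [? ? ->]]; apply/allpairsP; exists (x, y).
Qed.

Lemma smax_eq (s : seq int) (U : int) :
  0 <= U -> U \in s -> (forall x, x \in s -> x <= U) -> smax s = U.
Proof.
move=> U_ge0 Us le_U; apply/eqP; rewrite eq_le; apply/andP; split.
  rewrite /smax big_seq; apply: (big_ind (fun y => y <= U)) => // x y x_le y_le.
  by rewrite ge_max x_le y_le.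
elim: s Us {le_U} => // y r IH; rewrite inE /smax big_cons -/(smax r) le_max.
by case/orP=> [/eqP-> | /IH ->]; rewrite ?lexx ?orbT.
Qed.

Lemma diffset_interval (s : seq int) (U : int) :
  (forall x, x \in s -> 0 <= x <= U) ->
  (forall d, 0 <= d <= U -> exists x y, [/\ x \in s, y \in s & d = x - y]) ->
  forall d, d \in diffset s s = (- U <= d <= U).
Proof.
move=> bound cover d; apply/idP/idP.
  by case/mem_diffset=> x [y [/bound ? /bound ? ->]]; lia.
move=> d_bd; apply/mem_diffset.
have [d_ge0 | d_lt0] := lerP 0 d; first by apply: cover; lia.
have [x [y [xs ys dE]]] : exists x y, [/\ x \in s, y \in s & - d = x - y].
  by apply: cover; lia.
by exists y, x; split=> //; lia.
Qed.

Lemma euclid_nonneg (a b : int) : 0 <= a -> 0 < b ->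
  exists q r, [/\ a = q * b + r, 0 <= q & 0 <= r < b].
Proof.
move=> a_ge0 b_gt0; exists (a %/ b)%Z, (a %% b)%Z.
have b_neq0 : b != 0 by rewrite gt_eqF.
have r_bd : 0 <= (a %% b)%Z < b by rewrite modz_ge0 // ltz_pmod.
have aE := divz_eq a b; split=> //; nia.
Qed.

Definition inCNA (n m x : int) : Prop :=
  [\/ 0 <= x <= n - 1,
      exists2 k, 0 <= k <= m - 1 & x = n + k * (n + 1)
    | exists2 t, 0 <= t <= n - 1 & x = m * (n + 1) + t].

Definition cnaMax (n m : int) : int := m * (n + 1) + n - 1.

Section CNA.
Variables n m : int.
Hypotheses (n_ge0 : 0 <= n) (m_ge0 : 0 <= m).

Lemma inCNA_bound x : inCNA n m x -> 0 <= x <= cnaMax n m.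
Proof. by rewrite /cnaMax; case=> [? | [k ? ->] | [t ? ->]]; nia. Qed.

(* D_CNA is symmetric about M/2: the three pieces are exchanged. *)
Lemma inCNA_sym x : inCNA n m x -> inCNA n m (cnaMax n m - x).
Proof.
rewrite /cnaMax; case=> [x_bd | [k k_bd ->] | [t t_bd ->]].
- by apply: Or33; exists (n - 1 - x); [lia | ring].
- by apply: Or32; exists (m - 1 - k); [lia | ring].
- by apply: Or31; lia.
Qed.

(* M belongs to D_CNA (the image of 0 under the symmetry). *)
Lemma inCNA_max : 0 < n \/ 0 < m -> inCNA n m (cnaMax n m).
Proof.
move=> nm_pos; rewrite -[cnaMax n m]subr0; apply: inCNA_sym.
have [n_gt0 | n_eq0] : 0 < n \/ n = 0 by lia.
  by apply: Or31; lia.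
by apply: Or32; exists 0; [lia | rewrite n_eq0; ring].
Qed.

(* Every d in [0, M] is a difference of two elements of D_CNA: with
   d = q(n+1) + r, use n + q(n+1) minus a point of the first run, or the
   last run minus 0 when q = m. *)
Lemma inCNA_cover d : 0 <= d <= cnaMax n m ->
  exists x y, [/\ inCNA n m x, inCNA n m y & d = x - y].
Proof.
rewrite /cnaMax => d_bd.
have [q [r [dE q_ge0 r_bd]]] := @euclid_nonneg d (n + 1) ltac:(lia) ltac:(lia).
have [q_lt | q_ge] : q <= m - 1 \/ m <= q by lia.
  have long : inCNA n m (n + q * (n + 1)) by apply: Or32; exists q; lia.
  have [r_eq0 | r_gt0] : r = 0 \/ 0 < r by lia.
    exists (n + q * (n + 1)), n; split=> //; last by rewrite dE r_eq0; ring.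
    by apply: Or32; exists 0; [lia | ring].
  exists (n + q * (n + 1)), (n - r); split=> //; last by rewrite dE; ring.
  by apply: Or31; lia.
have q_eq : q = m by nia.
exists (m * (n + 1) + r), 0; split; last by rewrite dE q_eq; ring.
- by apply: Or33; exists r; [nia | done].
- by apply: Or31; nia.
Qed.

(* {0, n, ..., n^2} + D_CNA covers [0, n^2 + M]: the two runs absorb the
   ends of the range, the middle uses the progression n + k(n+1). *)
Lemma inCNA_cover_steps e : 0 <= e <= n * n + cnaMax n m ->
  exists j z, [/\ 0 <= j <= n, inCNA n m z & e = j * n + z].
Proof.
rewrite /cnaMax => e_bd.
have [n_eq0 | n_gt0] : n = 0 \/ 0 < n by lia.
  exists 0, e; split; [lia | | ring].
  by apply: Or32; exists e; [nia | rewrite n_eq0; ring].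
have [e_low | [e_high | e_mid]] :
    e <= n * n + n - 1 \/ m * (n + 1) <= e \/ n * n + n <= e <= m * (n + 1) - 1
  by lia.
- have [q [r [eE q_ge0 r_bd]]] := @euclid_nonneg e n ltac:(lia) n_gt0.
  by exists q, r; split; [nia | apply: Or31; lia | lia].
- have [q [r [eE q_ge0 r_bd]]] :=
    @euclid_nonneg (e - m * (n + 1)) n ltac:(lia) n_gt0.
  exists q, (m * (n + 1) + r); split; [nia | | lia].
  by apply: Or33; exists r; lia.
- have [q [r [eE q_ge0 r_bd]]] :=
    @euclid_nonneg (e - n) (n + 1) ltac:(lia) ltac:(lia).
  have [r_eq0 | r_gt0] : r = 0 \/ 0 < r by lia.
    exists 0, (n + q * (n + 1)); split; [lia | | lia].
    by apply: Or32; exists q; nia.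
  exists (n + 1 - r), (n + (q + r - n) * (n + 1)); split; [lia | | nia].
  by apply: Or32; exists (q + r - n); nia.
Qed.

End CNA.

Definition kmaPeriod (n m : int) : int := n * n + cnaMax n m + 1.

Definition inKMA (n m c x : int) : Prop :=
  inCNA n m x \/
  exists j i, [/\ 0 <= j <= n, 1 <= i <= c &
    x = j * n + (i - 1) * kmaPeriod n m + (2 * cnaMax n m + 1)].

Definition kmaMax (n m c : int) : int := cnaMax n m + c * kmaPeriod n m.

Section KMA.
Variables n m c : int.
Hypotheses (n_ge0 : 0 <= n) (m_ge0 : 0 <= m) (c_ge0 : 0 <= c).
Hypothesis nm_pos : 0 < n \/ 0 < m.

Let M_ge0 : 0 <= cnaMax n m.
Proof. by case/andP: (inCNA_bound n_ge0 m_ge0 (inCNA_max n_ge0 m_ge0 nm_pos)). Qed.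

Lemma inKMA_bound x : inKMA n m c x -> 0 <= x <= kmaMax n m c.
Proof.
rewrite /kmaMax; case=> [/(inCNA_bound n_ge0 m_ge0) | [j [i [j_bd i_bd ->]]]].
  by have := M_ge0; rewrite /kmaPeriod; nia.
have : (i - 1) * kmaPeriod n m <= (c - 1) * kmaPeriod n m.
  by apply: ler_wpM2r; rewrite /kmaPeriod; nia.
by have := M_ge0; rewrite /kmaPeriod; nia.
Qed.

(* M + cL belongs to G_KMA: it is M if c = 0, and n*n + (c-1)L + 2M + 1
   otherwise. *)
Lemma inKMA_max : inKMA n m c (kmaMax n m c).
Proof.
have [c_eq0 | c_gt0] : c = 0 \/ 0 < c by lia.
  by left; rewrite /kmaMax c_eq0 mul0r addr0; apply: inCNA_max.
right; exists n, c; split; [lia | lia | rewrite /kmaMax /kmaPeriod; ring].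
Qed.

Lemma inKMA_cover d : 0 <= d <= kmaMax n m c ->
  exists x y, [/\ inKMA n m c x, inKMA n m c y & d = x - y].
Proof.
rewrite /kmaMax => d_bd.
have [d_low | d_high] : d <= cnaMax n m \/ cnaMax n m < d by lia.
  have [x [y [Cx Cy dE]]] : exists x y, [/\ inCNA n m x, inCNA n m y & d = x - y].
    by apply: inCNA_cover => //; lia.
  by exists x, y; split=> //; left.
have L_gt0 : 0 < kmaPeriod n m by rewrite /kmaPeriod; nia.
have [q [r [dE q_ge0 r_bd]]] :=
  @euclid_nonneg (d - (cnaMax n m + 1)) (kmaPeriod n m) ltac:(lia) L_gt0.
have q_lt : q <= c - 1 by nia.
have [j [z [j_bd Cz rE]]] : exists j z, [/\ 0 <= j <= n, inCNA n m z & r = j * n + z].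
  by apply: inCNA_cover_steps => //; move: r_bd; rewrite /kmaPeriod; lia.
exists (j * n + ((q + 1) - 1) * kmaPeriod n m + (2 * cnaMax n m + 1)), (cnaMax n m - z).
split; [right; exists j, (q + 1); split; lia | left; exact: inCNA_sym | lia].
Qed.

End KMA.

Section Encoding.
Variables N1 N2 N3 : nat.

Lemma mem_D1 x : x \in D1 N1 <-> 0 <= x <= N1%:Z - 1.
Proof.
rewrite /D1 /irange mem_aprog //; split; first by case=> k [k_ge0 -> ?]; lia.
by move=> x_bd; exists x; split; lia.
Qed.

Lemma mem_D2 x : x \in D2 N1 N2 <->
  exists2 k, 0 <= k <= N2%:Z - 1 & x = k * (N1%:Z + 1).
Proof.
rewrite /D2 mem_aprog //; split; first by case=> k [k_ge0 -> ?]; exists k; nia.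
by case=> k k_bd ->; exists k; split; nia.
Qed.

Lemma mem_DCNA x : x \in DCNA N1 N2 <-> inCNA N1%:Z N2%:Z x.
Proof.
rewrite /DCNA !mem_cat; split.
  case/orP=> [/mem_D1 ? | /orP[/mem_shift[y /mem_D2[k k_bd ->] ->]
                           | /mem_shift[t /mem_D1 t_bd ->]]].
  - exact: Or31.
  - by apply: Or32; exists k => //; ring.
  - by apply: Or33; exists t => //; ring.
case=> [x_bd | [k k_bd ->] | [t t_bd ->]]; apply/orP.
- by left; apply/mem_D1.
- right; apply/orP; left; apply/mem_shift; exists (k * (N1%:Z + 1)); last ring.
  by apply/mem_D2; exists k.
- by right; apply/orP; right; apply/mem_shift; exists t; [apply/mem_D1 | ring].
Qed.

(* Excluding N1 = N2 = 0 makes D_CNA nonempty, so that MCNA is M. *)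
Hypothesis nm_pos : 0 < N1%:Z \/ 0 < N2%:Z.

Lemma MCNA_cnaMax : MCNA N1 N2 = cnaMax N1%:Z N2%:Z.
Proof.
have [n_ge0 m_ge0] : 0 <= N1%:Z /\ 0 <= N2%:Z by [].
have Cmax := inCNA_max n_ge0 m_ge0 nm_pos.
apply: smax_eq; first by case/andP: (inCNA_bound n_ge0 m_ge0 Cmax).
  exact/mem_DCNA.
by move=> x /mem_DCNA/(inCNA_bound n_ge0 m_ge0)/andP[].
Qed.

Lemma mem_D3 x : x \in D3 N1 N2 N3 <->
  exists j i, [/\ 0 <= j <= N1%:Z, 1 <= i <= N3%:Z &
    x = j * N1%:Z + (i - 1) * kmaPeriod N1%:Z N2%:Z].
Proof.
rewrite /D3 /sumset /kmaPeriod -MCNA_cnaMax -expr2; split.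
  case/allpairsP=> [[a b] [/mapP[j j_in ->] /mapP[i i_in ->] ->]].
  by move: j_in i_in; rewrite !mem_iota => ? ?; exists j%:Z, i%:Z; split; lia.
case=> j [i [j_bd i_bd ->]]; apply/allpairsP.
exists (j * N1%:Z, (i - 1) * (N1%:Z ^+ 2 + MCNA N1 N2 + 1)); split=> //.
- by apply/mapP; exists `|j|%N; [rewrite mem_iota; lia | rewrite gez0_abs //; lia].
- by apply/mapP; exists `|i|%N; [rewrite mem_iota; lia | rewrite gez0_abs //; lia].
Qed.

Lemma mem_GKMA x : x \in GKMA N1 N2 N3 <-> inKMA N1%:Z N2%:Z N3%:Z x.
Proof.
rewrite /GKMA mem_cat MCNA_cnaMax; split.
  case/orP=> [/mem_DCNA | /mem_shift[y /mem_D3[j [i [j_bd i_bd ->]]] ->]]; first by left.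
  by right; exists j, i.
case=> [/mem_DCNA -> // | [j [i [j_bd i_bd ->]]]].
apply/orP; right; apply/mem_shift.
by exists (j * N1%:Z + (i - 1) * kmaPeriod N1%:Z N2%:Z) => //; apply/mem_D3; exists j, i.
Qed.

Lemma smax_GKMA : smax (GKMA N1 N2 N3) = kmaMax N1%:Z N2%:Z N3%:Z.
Proof.
have [n_ge0 m_ge0 c_ge0] : [/\ 0 <= N1%:Z, 0 <= N2%:Z & 0 <= N3%:Z] by [].
have Gmax := inKMA_max n_ge0 m_ge0 c_ge0 nm_pos.
apply: smax_eq; first by case/andP: (inKMA_bound n_ge0 m_ge0 c_ge0 nm_pos Gmax).
  exact/mem_GKMA.
by move=> x /mem_GKMA/(inKMA_bound n_ge0 m_ge0 c_ge0 nm_pos)/andP[].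
Qed.

End Encoding.

Theorem mainTheorem13 (N1 N2 N3 : nat) :
  (N1, N2) <> (0%N, 0%N) ->
  forall d : int,
    d \in diffset (GKMA N1 N2 N3) (GKMA N1 N2 N3) =
    (- smax (GKMA N1 N2 N3) <= d <= smax (GKMA N1 N2 N3)).
Proof.
move=> nz d.
have nm_pos : 0 < N1%:Z \/ 0 < N2%:Z.
  by move: nz; case: N1 => [|a]; case: N2 => [|b] // _; lia.
have [n_ge0 m_ge0 c_ge0] : [/\ 0 <= N1%:Z, 0 <= N2%:Z & 0 <= N3%:Z] by [].
have memG := mem_GKMA N3 nm_pos.
rewrite smax_GKMA //; apply: diffset_interval => [x /memG | e e_bd].
  exact: inKMA_bound.
have [x [y [Gx Gy eE]]] := inKMA_cover n_ge0 m_ge0 c_ge0 nm_pos e_bd.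
by exists x, y; split=> //; apply/memG.
Qed.
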